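(* Consider a constrained online convex optimization problem: $\mathcal{F}\subset\mathbb{R}^d$ is a convex set with bounded $\ell_\infty$-diameter $D_\infty=\max_{\boldsymbol{x},\boldsymbol{y}\in\mathcal{F}}\Vert\boldsymbol{x}-\boldsymbol{y}\Vert_\infty$, and $f_1,\dots,f_T$ are convex loss functions with $\Vert\nabla f_t(\boldsymbol{\theta})\Vert_\infty\le G_\infty$ for all $t\in[T]$ and $\boldsymbol{\theta}\in\mathcal{F}$. Let the iterates be generated by AdaSGDMax with step size $\eta_t=\eta D_\infty/(G_\infty\sqrt{t\hat v_t})$ for some $\eta>0$, and assume $\hat v_1>0$. Then the regret $R_T:=\sum_{t=1}^T f_t(\boldsymbol{\theta}_t)-\min_{\boldsymbol{\theta}^*\in\mathcal{F}}\sum_{t=1}^T f_t(\boldsymbol{\theta}^* )$ satisfies $$R_T\le\frac{dD_\infty G_\infty\sqrt{\hat v_T T}}{2\eta}+\frac{dD_\infty G_\infty\eta(2\sqrt{T}-1)}{2\sqrt{\hat v_1}}.$$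
   Context: AdaSGDMax in the online setting: with $\boldsymbol{g}_t=\nabla f_t(\boldsymbol{\theta}_t)$, $v_0=0$, $\hat v_0=0$ and a fixed $\beta_2\in[0,1)$, set $v_t=\beta_2 v_{t-1}+(1-\beta_2)\Vert\boldsymbol{g}_t\Vert_2^2$, $\hat v_t=\max\{\hat v_{t-1},v_t\}$, and $\boldsymbol{\theta}_{t+1}=\Pi_{\mathcal{F}}(\boldsymbol{\theta}_t-\eta_t\boldsymbol{g}_t)$, where $\Pi_{\mathcal{F}}(\boldsymbol{x})=\arg\min_{\boldsymbol{y}\in\mathcal{F}}\Vert\boldsymbol{x}-\boldsymbol{y}\Vert_2$ is Euclidean projection and $\boldsymbol{\theta}_1\in\mathcal{F}$. *)

From mathcomp Require Import all_boot all_algebra all_classical all_reals all_analysis.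
Import GRing.Theory Num.Theory numFieldNormedType.Exports.
Set Implicit Arguments. Unset Strict Implicit. Unset Printing Implicit Defensive.
Local Open Scope ring_scope.
Local Open Scope classical_set_scope.

Section AdaSGDMaxDefs.
Variables (R : realType) (d : nat).

Definition dotv (x y : 'rV[R]_d) : R := \sum_(i < d) x ord0 i * y ord0 i.
Definition sqnorm2 (x : 'rV[R]_d) : R := \sum_(i < d) (x ord0 i) ^+ 2.
Definition norm2 (x : 'rV[R]_d) : R := Num.sqrt (sqnorm2 x).
Definition norminf (x : 'rV[R]_d) : R := \big[Num.max/0]_(i < d) `|x ord0 i|.

Definition convex_fun_on (F : set 'rV[R]_d) (f : 'rV[R]_d -> R) : Prop :=
  forall x y, F x -> F y -> forall l : R, 0 <= l <= 1 ->
    f (l *: x + (1 - l) *: y) <= l * f x + (1 - l) * f y.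

Definition is_gradient (f : 'rV[R]_d -> R) (x g : 'rV[R]_d) : Prop :=
  differentiable f x /\ forall v : 'rV[R]_d, 'd f x v = dotv g v.

Definition is_proj (F : set 'rV[R]_d) (x p : 'rV[R]_d) : Prop :=
  F p /\ forall y, F y -> norm2 (x - p) <= norm2 (x - y).

Definition is_linf_diameter (F : set 'rV[R]_d) (D : R) : Prop :=
  (forall x y, F x -> F y -> norminf (x - y) <= D) /\
  (exists x y, F x /\ F y /\ norminf (x - y) = D).

Fixpoint ada_v (b2 : R) (g : nat -> 'rV[R]_d) (t : nat) : R :=
  match t with
  | 0 => 0
  | t'.+1 => b2 * ada_v b2 g t' + (1 - b2) * sqnorm2 (g t)
  end.

Fixpoint ada_vhat (b2 : R) (g : nat -> 'rV[R]_d) (t : nat) : R :=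
  match t with
  | 0 => 0
  | t'.+1 => Num.max (ada_vhat b2 g t') (ada_v b2 g t)
  end.

End AdaSGDMaxDefs.

From mathcomp Require Import all_boot all_algebra all_classical all_reals all_analysis.
From mathcomp Require Import all_order ring lra.
Import GRing.Theory Num.Theory numFieldNormedType.Exports Order.TTheory.
Set Implicit Arguments. Unset Strict Implicit. Unset Printing Implicit Defensive.
Local Open Scope ring_scope.
Local Open Scope classical_set_scope.

(* Projected online gradient descent with nonincreasing positive step sizes
   [eta_t] and comparator [u] satisfies, by convexity and the nonexpansiveness
   of the projection,
     [f_t(x_t) - f_t(u) <= (|x_t - u|^2 - |x_(t+1) - u|^2) / (2 eta_t) + eta_t |g_t|^2 / 2],
   and summing by parts bounds the regret by [M / (2 eta_T) + sum_t eta_t |g_t|^2 / 2]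
   where [M = d D^2] bounds the squared distances [|x_t - u|^2].  For AdaSGDMax,
   [1 / eta_T] is [G sqrt (T vhat_T) / (eta D)], and since [vhat] is nondecreasing,
   [eta_t |g_t|^2 <= d D G eta / (sqrt t sqrt vhat_1)], while
   [sum_(t <= T) 1 / sqrt t <= 2 sqrt T - 1].  A zero diameter pins every
   iterate to the comparator. *)

Section VectorNorms.
Variables (R : realType) (d : nat).
Implicit Types (x y z p : 'rV[R]_d) (F : set 'rV[R]_d).

Lemma dotvC x y : dotv x y = dotv y x.
Proof. by apply: eq_bigr => i _; rewrite mulrC. Qed.

Lemma dotvDl x y z : dotv (x + y) z = dotv x z + dotv y z.
Proof. by rewrite /dotv -big_split; apply: eq_bigr => i _; rewrite mxE mulrDl. Qed.

Lemma dotvZl (a : R) x y : dotv (a *: x) y = a * dotv x y.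
Proof. by rewrite /dotv mulr_sumr; apply: eq_bigr => i _; rewrite mxE mulrA. Qed.

Lemma dotvNl x y : dotv (- x) y = - dotv x y.
Proof. by rewrite -scaleN1r dotvZl mulN1r. Qed.

Lemma dotvNr x y : dotv x (- y) = - dotv x y.
Proof. by rewrite dotvC dotvNl dotvC. Qed.

Lemma sqnorm2E x : sqnorm2 x = dotv x x.
Proof. by apply: eq_bigr => i _; rewrite expr2. Qed.

Lemma sqnorm2_ge0 x : 0 <= sqnorm2 x.
Proof. by apply: sumr_ge0 => i _; rewrite sqr_ge0. Qed.

Lemma sqnorm2D x y : sqnorm2 (x + y) = sqnorm2 x + 2 * dotv x y + sqnorm2 y.
Proof.
by rewrite !sqnorm2E !dotvDl ![dotv _ (_ + _)]dotvC !dotvDl (dotvC y x); ring.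
Qed.

Lemma sqnorm2Z (a : R) x : sqnorm2 (a *: x) = a ^+ 2 * sqnorm2 x.
Proof. by rewrite !sqnorm2E dotvZl dotvC dotvZl mulrA -expr2. Qed.

Lemma mem_convex_comb F x y (l : R) : convex_set F -> F x -> F y -> 0 <= l <= 1 ->
  F (l *: x + (1 - l) *: y).
Proof.
move=> convF Fx Fy /andP[l_ge0 l_le1].
by have := convF x y (Itv01 l_ge0 l_le1); rewrite !inE; apply.
Qed.

(* If [<x - p, y - p>] were positive, moving from [p] towards [y] by the step
   [l = c / (c + |y - p|^2)] would bring a point of [F] strictly closer to [x]. *)
Lemma proj_dotv_le0 F x p y : convex_set F -> is_proj F x p -> F y ->
  dotv (x - p) (y - p) <= 0.
Proof.
move=> convF [Fp p_min] Fy; rewrite leNgt; apply/negP => c_gt0.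
set c := dotv (x - p) (y - p) in c_gt0; set s := sqnorm2 (y - p).
have s_ge0 : 0 <= s by apply: sqnorm2_ge0.
have cs_gt0 : 0 < c + s by lra.
set l := c / (c + s).
have l_gt0 : 0 < l by rewrite divr_gt0.
have l_le1 : l <= 1 by rewrite ler_pdivrMr // mul1r; lra.
have lcs : l * (c + s) = c by rewrite mulfVK // gt_eqF.
have Fz : F (l *: y + (1 - l) *: p) by apply: mem_convex_comb; rewrite ?(ltW l_gt0).
have := p_min _ Fz; rewrite /norm2 ler_sqrt ?sqnorm2_ge0 //.
have -> : x - (l *: y + (1 - l) *: p) = (x - p) + (- l) *: (y - p).
  by apply/rowP => i; rewrite !mxE; ring.
rewrite [sqnorm2 (_ + _ *: _)]sqnorm2D sqnorm2Z dotvC dotvZl dotvC -/c -/s; nra.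
Qed.

Lemma proj_sqnorm2_le F x p y : convex_set F -> is_proj F x p -> F y ->
  sqnorm2 (p - y) <= sqnorm2 (x - y).
Proof.
move=> convF projp Fy.
have obtuse := proj_dotv_le0 convF projp Fy.
have -> : x - y = (x - p) + (p - y) by rewrite addrA subrK.
rewrite [sqnorm2 (x - p + _)]sqnorm2D -[p - y]opprB dotvNr opprB.
have := sqnorm2_ge0 (x - p); lra.
Qed.

(* The difference quotients [(f (x + h (y - x)) - f x) / h] are bounded by
   [f y - f x] for [0 < h < 1], and they tend to the directional derivative. *)
Lemma convex_gradient_le F f x y g : convex_fun_on F f -> F x -> F y ->
  is_gradient f x g -> f x + dotv g (y - x) <= f y.
Proof.
move=> convf Fx Fy [dfx dfxE]; rewrite -lerBrDl -dfxE -deriveE //.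
have := @diff_derivable _ _ _ f x (y - x) dfx.
rewrite /derive; set q := (fun h : R => _) => q_cvg.
have q_cvg_right : q @ 0^'+ --> lim (q @ 0^').
  move=> A /q_cvg /nbhs_ballP [_ /posnumP[e] ballA].
  by exists e%:num => //= z ez; rewrite lt_def => /andP[+ _]; apply: ballA.
apply: (cvgr_to_le q_cvg_right); near=> h.
have h_gt0 : 0 < h by near: h; exact: nbhs_right_gt.
have h_lt1 : h < 1 by near: h; exact: nbhs_right_lt.
rewrite /q /=; have -> : h *: (y - x) + x = h *: y + (1 - h) *: x.
  by apply/rowP => i; rewrite !mxE; ring.
have := convf y x Fy Fx h; rewrite (ltW h_gt0) (ltW h_lt1) => /(_ isT) fconv.
rewrite -[_ *: _]/(h^-1 * _) ler_pdivrMl //; lra.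
Unshelve. all: by end_near.
Qed.

Lemma norminf_ge0 x : 0 <= norminf x.
Proof. by rewrite /norminf; elim/big_ind: _ => //= a b a0 b0; rewrite le_max a0. Qed.

Lemma normr_coord_le_norminf x i : `|x ord0 i| <= norminf x.
Proof. by rewrite /norminf (bigD1 i) //= le_max lexx. Qed.

Lemma norminf_le0 x : norminf x <= 0 -> x = 0.
Proof.
move=> x_le0; apply/rowP => i; apply/eqP; rewrite mxE -normr_le0.
exact: le_trans (normr_coord_le_norminf x i) x_le0.
Qed.

Lemma sqnorm2_le_norminf x : sqnorm2 x <= d%:R * norminf x ^+ 2.
Proof.
have -> : d%:R * norminf x ^+ 2 = \sum_(i < d) norminf x ^+ 2.
  by rewrite sumr_const card_ord mulr_natl.
apply: ler_sum => i _; rewrite -real_normK ?num_real //.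
by rewrite lerXn2r ?nnegrE ?normr_ge0 ?norminf_ge0 ?normr_coord_le_norminf.
Qed.

Lemma linf_diameter_ge0 F D : is_linf_diameter F D -> 0 <= D.
Proof. by case=> _ [x [y [_ [_ <-]]]]; apply: norminf_ge0. Qed.

Lemma linf_diameter_sqnorm2_le F D x y : is_linf_diameter F D -> F x -> F y ->
  sqnorm2 (x - y) <= d%:R * D ^+ 2.
Proof.
move=> [diam_le _] Fx Fy; apply: le_trans (sqnorm2_le_norminf _) _.
rewrite ler_wpM2l ?ler0n //.
by have := diam_le _ _ Fx Fy; have := norminf_ge0 (x - y); nra.
Qed.

Lemma linf_diameter0_eq F x y : is_linf_diameter F 0 -> F x -> F y -> x = y.
Proof. by move=> [diam_le _] Fx Fy; apply/subr0_eq/norminf_le0/diam_le. Qed.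

End VectorNorms.

Section RealSums.
Variable R : realType.

(* [2 u (u - s) >= 2 u^2 - (u^2 + s^2) = 1] for [u = sqrt (x + 1)], [s = sqrt x]. *)
Lemma invr_sqrt_le_sqrtB (x : R) : 0 <= x ->
  (Num.sqrt (x + 1))^-1 <= 2 * (Num.sqrt (x + 1) - Num.sqrt x).
Proof.
move=> x_ge0; set u := Num.sqrt (x + 1); set s := Num.sqrt x.
have u_gt0 : 0 < u by rewrite sqrtr_gt0; lra.
have uu : u ^+ 2 = x + 1 by rewrite sqr_sqrtr //; lra.
have ss : s ^+ 2 = x by rewrite sqr_sqrtr.
have amgm : 2 * s * u <= s ^+ 2 + u ^+ 2 by have := sqr_ge0 (s - u); nra.
rewrite -[u^-1]mulr1 ler_pdivrMl //; nra.
Qed.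

Lemma sum_invr_sqrt_le (n : nat) :
  \sum_(1 <= t < n.+2) (Num.sqrt (t%:R : R))^-1 <= 2 * Num.sqrt n.+1%:R - 1.
Proof.
elim: n => [|n IHn]; first by rewrite big_nat1 sqrtr1 invr1; lra.
rewrite big_nat_recr //= -natr1.
have := invr_sqrt_le_sqrtB (ler0n R n.+1); lra.
Qed.

(* Summation by parts; keeping the slack [M - a_(n+2)] in the bound is what
   makes the induction go through. *)
Lemma sum_diff_mul_nondecr_le (a b : nat -> R) (M : R) (n : nat) :
  (forall t, 0 <= a t) -> (forall t, (0 < t)%N -> a t <= M) ->
  (forall t, (0 < t)%N -> 0 <= b t) -> (forall t, (0 < t)%N -> b t <= b t.+1) ->
  \sum_(1 <= t < n.+2) (a t - a t.+1) * b t <= b n.+1 * (M - a n.+2).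
Proof.
move=> a_ge0 a_leM b_ge0 b_nondecr.
elim: n => [|n IHn].
  by rewrite big_nat1; have := a_leM 1%N isT; have := b_ge0 1%N isT; nra.
rewrite big_nat_recr //=.
have := a_leM n.+2 isT; have := b_nondecr n.+1 isT; have := b_ge0 n.+1 isT; nra.
Qed.

End RealSums.

Section ProjectedGradientDescent.
Variables (R : realType) (d : nat) (F : set 'rV[R]_d).
Variables (f : nat -> 'rV[R]_d -> R) (grad : nat -> 'rV[R]_d -> 'rV[R]_d).
Variables (step : nat -> R) (theta : nat -> 'rV[R]_d) (theta_star : 'rV[R]_d).
Hypothesis convF : convex_set F.
Hypothesis f_convex : forall t, convex_fun_on F (f t).
Hypothesis f_grad : forall t x, F x -> is_gradient (f t) x (grad t x).
Hypothesis step_gt0 : forall t, (0 < t)%N -> 0 < step t.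
Hypothesis theta1_in : F (theta 1%N).
Hypothesis theta_proj : forall t, (0 < t)%N ->
  is_proj F (theta t - step t *: grad t (theta t)) (theta t.+1).
Hypothesis theta_star_in : F theta_star.

Let g t := grad t (theta t).
Let dist2 t := sqnorm2 (theta t - theta_star).

Lemma pgd_iterate_in t : (0 < t)%N -> F (theta t).
Proof. by case: t => // -[//|t] _; case: (theta_proj (isT : 0 < t.+1)%N). Qed.

Lemma pgd_regret_step t : (0 < t)%N ->
  f t (theta t) - f t theta_star <=
    (dist2 t - dist2 t.+1) / (2 * step t) + step t * sqnorm2 (g t) / 2.
Proof.
move=> t_gt0; have step_t_gt0 := step_gt0 t_gt0.
have Ftheta := pgd_iterate_in t_gt0.
have lin_lower := convex_gradient_le (f_convex t) Ftheta theta_star_in (f_grad t Ftheta).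
have proj_closer := proj_sqnorm2_le convF (theta_proj t_gt0) theta_star_in.
have step_split : theta t - step t *: grad t (theta t) - theta_star
    = (theta t - theta_star) + (- step t) *: g t.
  by apply/rowP => i; rewrite !mxE; ring.
rewrite step_split [sqnorm2 (_ + _ *: _)]sqnorm2D sqnorm2Z dotvC dotvZl in proj_closer.
rewrite -opprB dotvNr -/(g t) in lin_lower.
rewrite -/(dist2 t) -/(dist2 t.+1) in proj_closer *.
set q := dotv (g t) (theta t - theta_star) in lin_lower proj_closer.
have : q <= (dist2 t - dist2 t.+1) / (2 * step t) + step t * sqnorm2 (g t) / 2.
  rewrite -(ler_pM2l (mulr_gt0 (ltr0Sn R 1) step_t_gt0)) mulrDr mulrCA mulfV; last first.
    by rewrite gt_eqF // mulr_gt0.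
  nra.
lra.
Qed.

Lemma pgd_regret (M : R) (T : nat) :
  (forall t, (0 < t)%N -> dist2 t <= M) ->
  (forall t, (0 < t)%N -> step t.+1 <= step t) -> (0 < T)%N ->
  \sum_(1 <= t < T.+1) (f t (theta t) - f t theta_star) <=
    M / (2 * step T) + \sum_(1 <= t < T.+1) step t * sqnorm2 (g t) / 2.
Proof.
move=> dist2_le step_noninc; case: T => // n _.
set b := fun t => (2 * step t)^-1.
have b_ge0 t : (0 < t)%N -> 0 <= b t.
  by move=> t_gt0; rewrite invr_ge0 mulr_ge0 // ltW // step_gt0.
have b_nondecr t : (0 < t)%N -> b t <= b t.+1.
  move=> t_gt0; rewrite lef_pV2 ?posrE ?mulr_gt0 ?step_gt0 //.
  by rewrite ler_pM2l // step_noninc.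
have dist2_ge0 t : 0 <= dist2 t by exact: sqnorm2_ge0.
have telescope : \sum_(1 <= t < n.+2) (dist2 t - dist2 t.+1) / (2 * step t)
    <= (2 * step n.+1)^-1 * (M - dist2 n.+2).
  exact: sum_diff_mul_nondecr_le n dist2_ge0 dist2_le b_ge0 b_nondecr.
have regret_le : \sum_(1 <= t < n.+2) (f t (theta t) - f t theta_star) <=
    \sum_(1 <= t < n.+2) ((dist2 t - dist2 t.+1) / (2 * step t)
                          + step t * sqnorm2 (g t) / 2).
  by apply: ler_sum_nat => t /andP[t_gt0 _]; exact: pgd_regret_step.
rewrite [X in _ <= X]big_split /= in regret_le; apply: (le_trans regret_le).
rewrite lerD2r; apply: (le_trans telescope).
have := mulr_ge0 (b_ge0 n.+1 isT) (dist2_ge0 n.+2); rewrite /b /= mulrC; lra.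
Qed.

End ProjectedGradientDescent.

Definition adasgdmax_step (R : realType) (d : nat) (eta D G beta2 : R)
    (g : nat -> 'rV[R]_d) (t : nat) : R :=
  eta * D / (G * Num.sqrt (t%:R * ada_vhat beta2 g t)).

Section AdaSGDMax.
Variables (R : realType) (d : nat) (beta2 : R) (g : nat -> 'rV[R]_d).
Let vhat := ada_vhat beta2 g.

Lemma ada_vhat_nondecr : {homo vhat : s t / (s <= t)%N >-> s <= t}.
Proof. by apply/nondecreasing_seqP => t; rewrite /vhat /= le_max lexx. Qed.

Lemma ada_vhat1_gt0_norminf_bound (G : R) :
  0 < vhat 1%N -> norminf (g 1%N) <= G -> 0 < G.
Proof.
move=> vhat1_gt0 g1_le; rewrite ltNge; apply: contraTN vhat1_gt0 => G_le0.
have g1_eq0 : g 1%N = 0 by apply/norminf_le0/(le_trans g1_le).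
rewrite /vhat /=; have -> : sqnorm2 (g 1%N) = 0.
  by rewrite /sqnorm2 big1 // => i _; rewrite g1_eq0 mxE expr0n.
by rewrite !mulr0 addr0 maxxx ltxx.
Qed.

Variables (eta D G : R).
Hypotheses (eta_gt0 : 0 < eta) (D_gt0 : 0 < D) (G_gt0 : 0 < G).
Hypothesis vhat1_gt0 : 0 < vhat 1%N.
Let step := adasgdmax_step eta D G beta2 g.

Lemma ada_vhat_gt0 t : (0 < t)%N -> 0 < vhat t.
Proof. by move=> t_gt0; apply: lt_le_trans vhat1_gt0 (ada_vhat_nondecr t_gt0). Qed.

Lemma adasgdmax_step_gt0 t : (0 < t)%N -> 0 < step t.
Proof.
move=> t_gt0; rewrite /step /adasgdmax_step divr_gt0 ?mulr_gt0 //.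
by rewrite sqrtr_gt0 mulr_gt0 ?ltr0n ?ada_vhat_gt0.
Qed.

Lemma adasgdmax_step_noninc t : (0 < t)%N -> step t.+1 <= step t.
Proof.
move=> t_gt0.
have tvhat_gt0 s : (0 < s)%N -> 0 < s%:R * vhat s.
  by move=> s_gt0; rewrite mulr_gt0 ?ltr0n ?ada_vhat_gt0.
have tvhat_le : t%:R * vhat t <= t.+1%:R * vhat t.+1.
  apply: ler_pM; rewrite ?ler0n ?ler_nat //; last exact: ada_vhat_nondecr.
  exact/ltW/ada_vhat_gt0.
rewrite /step /adasgdmax_step ler_wpM2l ?(mulr_ge0 (ltW eta_gt0) (ltW D_gt0)) //.
rewrite lef_pV2 ?posrE ?mulr_gt0 ?sqrtr_gt0 ?tvhat_gt0 //.
by rewrite ler_pM2l // ler_sqrt ?tvhat_le // ltW ?tvhat_gt0.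
Qed.

Lemma adasgdmax_step_sqnorm2_le t : (0 < t)%N -> norminf (g t) <= G ->
  step t * sqnorm2 (g t) / 2 <=
    d%:R * D * G * eta / (2 * Num.sqrt (vhat 1%N)) * (Num.sqrt t%:R)^-1.
Proof.
move=> t_gt0 gt_leG.
have g_sqnorm2_le : sqnorm2 (g t) <= d%:R * G ^+ 2.
  apply: le_trans (sqnorm2_le_norminf _) _; rewrite ler_wpM2l ?ler0n //.
  by have := norminf_ge0 (g t); nra.
have sqrt_t_gt0 : 0 < Num.sqrt (t%:R : R) by rewrite sqrtr_gt0 ltr0n.
have sqrt_vhat1_gt0 : 0 < Num.sqrt (vhat 1%N) by rewrite sqrtr_gt0.
have sqrt_vhat_ge : Num.sqrt (vhat 1%N) <= Num.sqrt (vhat t).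
  by rewrite ler_sqrt; [exact: ada_vhat_nondecr t_gt0 | exact/ltW/ada_vhat_gt0].
have sqrt_vhat_gt0 := lt_le_trans sqrt_vhat1_gt0 sqrt_vhat_ge.
have -> : step t * sqnorm2 (g t) / 2
    = eta * D / (2 * G * Num.sqrt t%:R) * (sqnorm2 (g t) / Num.sqrt (vhat t)).
  by rewrite /step /adasgdmax_step sqrtrM ?ler0n //; field; rewrite !gt_eqF.
have -> : d%:R * D * G * eta / (2 * Num.sqrt (vhat 1%N)) * (Num.sqrt t%:R)^-1
    = eta * D / (2 * G * Num.sqrt t%:R) * (d%:R * G ^+ 2 / Num.sqrt (vhat 1%N)).
  by field; rewrite !gt_eqF.
apply: ler_wpM2l; first by rewrite ltW // divr_gt0 ?mulr_gt0.
apply: ler_pM => //; first exact: sqnorm2_ge0.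
by rewrite lef_pV2 ?posrE.
Qed.

Lemma sqdiam_div_adasgdmax_step T : (0 < T)%N ->
  d%:R * D ^+ 2 / (2 * step T) = d%:R * D * G * Num.sqrt (vhat T * T%:R) / (2 * eta).
Proof.
move=> T_gt0; have : 0 < vhat T * T%:R by rewrite mulr_gt0 ?ltr0n ?ada_vhat_gt0.
rewrite /step /adasgdmax_step [T%:R * _]mulrC -sqrtr_gt0.
by set s := Num.sqrt _ => s_gt0; field; rewrite !gt_eqF.
Qed.

Lemma adasgdmax_step_sum_le (T : nat) :
  (forall t, (1 <= t <= T)%N -> norminf (g t) <= G) -> (0 < T)%N ->
  \sum_(1 <= t < T.+1) step t * sqnorm2 (g t) / 2 <=
    d%:R * D * G * eta * (2 * Num.sqrt T%:R - 1) / (2 * Num.sqrt (vhat 1%N)).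
Proof.
move=> g_leG; case: T g_leG => // n g_leG _.
set K := d%:R * D * G * eta / (2 * Num.sqrt (vhat 1%N)).
have K_ge0 : 0 <= K by rewrite divr_ge0 ?mulr_ge0 ?ler0n ?ltW // ?sqrtr_gt0.
rewrite mulrAC -/K; apply: le_trans (ler_wpM2l K_ge0 (sum_invr_sqrt_le R n)).
rewrite mulr_sumr; apply: ler_sum_nat => t /andP[t_gt0 t_le].
by apply: adasgdmax_step_sqnorm2_le => //; apply: g_leG; rewrite t_gt0 -ltnS.
Qed.

End AdaSGDMax.

Theorem corollary3p2p1 (R : realType) (d : nat) (F : set 'rV[R]_d)
  (Dinf Ginf eta beta2 : R)
  (f : nat -> 'rV[R]_d -> R) (grad : nat -> 'rV[R]_d -> 'rV[R]_d)
  (theta : nat -> 'rV[R]_d) (T : nat) :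
  convex_set F ->
  is_linf_diameter F Dinf ->
  (forall t, convex_fun_on F (f t)) ->
  (forall t x, F x -> is_gradient (f t) x (grad t x)) ->
  (forall t x, (1 <= t <= T)%N -> F x -> norminf (grad t x) <= Ginf) ->
  0 <= beta2 < 1 ->
  0 < eta ->
  F (theta 1%N) ->
  (forall t, (1 <= t)%N ->
     is_proj F
       (theta t - (eta * Dinf /
          (Ginf * Num.sqrt (t%:R * ada_vhat beta2 (fun s => grad s (theta s)) t)))
          *: grad t (theta t))
       (theta t.+1)) ->
  0 < ada_vhat beta2 (fun s => grad s (theta s)) 1 ->
  (1 <= T)%N ->
  forall theta_star, F theta_star ->
    \sum_(1 <= t < T.+1) f t (theta t) - \sum_(1 <= t < T.+1) f t theta_star <=
      d%:R * Dinf * Ginf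
        * Num.sqrt (ada_vhat beta2 (fun s => grad s (theta s)) T * T%:R) / (2 * eta)
      + d%:R * Dinf * Ginf * eta * (2 * Num.sqrt T%:R - 1)
        / (2 * Num.sqrt (ada_vhat beta2 (fun s => grad s (theta s)) 1)).
Proof.
move=> convF diamF f_convex f_grad grad_le _ eta_gt0 theta1_in theta_proj vhat1_gt0 T_gt0
  theta_star theta_star_in.
set g := fun s => grad s (theta s) in theta_proj vhat1_gt0 *.
pose step := adasgdmax_step eta Dinf Ginf beta2 g.
have theta_in := pgd_iterate_in (step := step) theta1_in theta_proj.
have [D_eq0|D_neq0] := eqVneq Dinf 0.
  rewrite D_eq0 in diamF *; rewrite !(mulr0, mul0r) addr0 -sumrB big_nat big1 // => t.
  case/andP=> t_gt0 _.
  by rewrite (linf_diameter0_eq diamF (theta_in t t_gt0) theta_star_in) subrr.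
have D_gt0 : 0 < Dinf by rewrite lt0r D_neq0 (linf_diameter_ge0 diamF).
have G_gt0 := ada_vhat1_gt0_norminf_bound vhat1_gt0 (grad_le 1%N _ T_gt0 theta1_in).
have := pgd_regret (step := step) (M := d%:R * Dinf ^+ 2) convF f_convex f_grad
  (adasgdmax_step_gt0 eta_gt0 D_gt0 G_gt0 vhat1_gt0) theta1_in theta_proj theta_star_in
  (fun t t_gt0 => linf_diameter_sqnorm2_le diamF (theta_in t t_gt0) theta_star_in)
  (adasgdmax_step_noninc eta_gt0 D_gt0 G_gt0 vhat1_gt0) T_gt0.
rewrite sqdiam_div_adasgdmax_step // -sumrB => /le_trans; apply; rewrite lerD2l.
apply: adasgdmax_step_sum_le => // t t_range.
by case/andP: (t_range) => t_gt0 _; exact: grad_le t_range (theta_in t t_gt0).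
Qed.
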